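(* Let $A\in\mathrm{GL}(\mathcal S)$, let $\varepsilon_A\in\mathrm{Inv}(\mathcal S)$ be the unique element with $\varepsilon_A\circ A(\Delta_0)=\Delta_0$, and let $\sigma\in S_6$ be the permutation with $\varepsilon_A\circ A(\mathfrak p_i)=\mathfrak p_{\sigma(i)}$ for $i=1,\dots,6$. Then for every $1\le i\le6$, $$A\circ\varepsilon^{(i)}=\varepsilon^{(\sigma(i))}\circ A .$$
   Context: Work over an algebraically closed field of characteristic $\neq2$. $F(X)=\sum_{i=0}^6f_iX^i$, $f_6\neq0$, distinct roots $\theta_1,\dots,\theta_6$. $P_j(X)=\prod_{i\ne j}(X-\theta_i)$, $\omega_j=P_j(\theta_j)$. Points of $\mathbb P^5$ are identified with $P(X)=\sum_{j=0}^5p_jX^j$; $\pi_j=P(\theta_j)/\omega_j$. $\mathcal S\subset\mathbb P^5$ is defined by $\sum_j\theta_j^i\omega_j\pi_j^2=0$, $i=0,1,2$. $\varepsilon^{(i)}$ is the involution $\pi_j\mapsto(-1)^{\delta_{ij}}\pi_j$; $\mathrm{Inv}(\mathcal S)$ is the commutative group of order 32 generated by them. $\Delta_0=\{(p_0:p_1:0:0:0:0)\}$, $\Delta_i=\varepsilon^{(i)}(\Delta_0)$, $\Delta_{ij}=\varepsilon^{(i)}\varepsilon^{(j)}(\Delta_0)$, $\Delta_{ijk}=\varepsilon^{(i)}\varepsilon^{(j)}\varepsilon^{(k)}(\Delta_0)$; these 32 lines are all the lines on $\mathcal S$, and $\mathrm{Inv}(\mathcal S)$ permutes them simply transitively. $\mathfrak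 p_i=\Delta_0\cap\Delta_i=(-\theta_i:1:0:0:0:0)$; these are the only points of $\Delta_0$ lying on another line of $\mathcal S$. $\mathrm{GL}(\mathcal S)$ is the group of automorphisms of $\mathcal S$ which are restrictions of projective linear transformations of $\mathbb P^5$. *)

From HB Require Import structures.
From mathcomp Require Import all_boot all_order all_algebra all_fingroup.
Set Implicit Arguments. Unset Strict Implicit. Unset Printing Implicit Defensive.
Import GRing.Theory.
Local Open Scope ring_scope.

Section Kummer.
Variable K : closedFieldType.
Variable theta : 'I_6 -> K.

Definition omega (j : 'I_6) : K := \prod_(i < 6 | i != j) (theta j - theta i).

(* Points of P^5 are nonzero column vectors p = (p_0,...,p_5)^T up to scalar;
   P(X) = sum_j p_j X^j.  piMx maps p to (pi_1,...,pi_6), pi_j = P(theta_j)/omega_j. *)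
Definition piMx : 'M[K]_6 := \matrix_(j < 6, k < 6) (theta j ^+ k / omega j).

Definition piv (p : 'cV[K]_6) (j : 'I_6) : K := (piMx *m p) j 0.

Definition peq (u v : 'cV[K]_6) : Prop := exists2 c : K, c != 0 & u = c *: v.

Definition inS (p : 'cV[K]_6) : Prop :=
  p != 0 /\ forall i : nat, (i < 3)%N ->
    \sum_(j < 6) theta j ^+ i * omega j * piv p j ^+ 2 = 0.

Definition inGLS (M : 'M[K]_6) : Prop :=
  M \in unitmx /\ forall p, inS p <-> inS (M *m p).

(* eps_T = product of eps^(i), i in T; in pi-coordinates it flips the signs
   of pi_i for i in T.  Inv(S) = { eps_T | T : {set 'I_6} } (as projective maps). *)
Definition epsSet (T : {set 'I_6}) : 'M[K]_6 :=
  invmx piMx *m diag_mx (\row_(j < 6) (if j \in T then -1 else 1)) *m piMx.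

Definition eps (i : 'I_6) : 'M[K]_6 := epsSet [set i].

Definition inDelta0 (p : 'cV[K]_6) : Prop := forall j : 'I_6, (2 <= j)%N -> p j 0 = 0.

Definition frakp (i : 'I_6) : 'cV[K]_6 :=
  \col_(k < 6) (if k == 0 :> nat then - theta i else if k == 1 :> nat then 1 else 0).

End Kummer.

(* Everything is done in the coordinates y = (pi_1, ..., pi_6) = V p, where
   V = piMx is invertible (a scaled Vandermonde matrix).  There S becomes the
   cone  sum_j Q(theta_j) omega_j y_j^2 = 0  (all Q of degree <= 2), the eps_T
   become diagonal sign matrices, and A becomes M = V A V^-1.

   1. Sign changes of coordinates preserve S.  Hence for deg Q <= 2 the Gram
      matrix of the quadric y |-> q_Q(M^-1 y), which vanishes on S, is
      diagonal, and its diagonal annihilates every "null" vector z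
      (sum_j theta_j^i omega_j z_j = 0 for i < 3) -- those are the squares of
      points of S.  Annihilators of the null vectors vanishing at three
      indices vanish identically.
   2. If Q(theta_j) = 0, that diagonal vanishes on the support of column j of
      M.  Comparing Q = X - theta_j with X (X - theta_j) shows that every
      column of M has a single nonzero entry: M is monomial, M e_j ~ e_(tau j).
   3. A monomial matrix conjugates diag(signs) to the permuted signs, and the
      hypothesis on the points p_i forces tau = sigma. *)

From HB Require Import structures.
From mathcomp Require Import all_boot all_order all_algebra all_fingroup ring.
Import GRing.Theory.
Local Open Scope ring_scope.
Set Implicit Arguments.
Unset Strict Implicit.

Section QuadraticForms.
Variables (R : comNzRingType) (n : nat).
Implicit Types (N : 'M[R]_n) (l : 'rV[R]_n) (y : 'cV[R]_n) (a b : 'I_n).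

Definition gram N l : 'M[R]_n := N^T *m diag_mx l *m N.

Definition qform N l y : R := \sum_k l 0 k * (N *m y) k 0 ^+ 2.

Lemma gram_entry N l a b : gram N l a b = \sum_k N k a * (l 0 k * N k b).
Proof.
by rewrite /gram -mulmxA mul_diag_mx !mxE; apply: eq_bigr => k _; rewrite !mxE.
Qed.

Lemma gram_sym N l a b : gram N l a b = gram N l b a.
Proof. by rewrite !gram_entry; apply: eq_bigr => k _; ring. Qed.

Lemma gram_combine N (c1 c2 : R) l1 l2 a b :
  gram N (c1 *: l1 - c2 *: l2) a b = c1 * gram N l1 a b - c2 * gram N l2 a b.
Proof.
rewrite !gram_entry !mulr_sumr -sumrB; apply: eq_bigr => k _; rewrite !mxE; ring.
Qed.

Lemma gram_inverse N Ninv l : Ninv *m N = 1%:M -> N^T *m gram Ninv l *m N = diag_mx l.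
Proof. by move=> NK; rewrite /gram !mulmxA -trmx_mul NK trmx1 mul1mx -mulmxA NK mulmx1. Qed.

Lemma qform_expand N l y :
  qform N l y = \sum_a \sum_b gram N l a b * (y a 0 * y b 0).
Proof.
have -> : qform N l y = (y^T *m gram N l *m y) 0 0.
  rewrite /gram -!mulmxA mulmxA -trmx_mul mul_diag_mx !mxE.
  by apply: eq_bigr => k _; rewrite !mxE; ring.
set G := gram N l; rewrite mxE exchange_big; apply: eq_bigr => a _.
by rewrite mxE mulr_suml; apply: eq_bigr => b _; rewrite !mxE; ring.
Qed.

Definition rescale (s : 'I_n -> R) y : 'cV[R]_n := \col_k (s k * y k 0).

Definition sign_at a (k : 'I_n) : R := if k == a then -1 else 1.

Lemma sign_at_sqr a k : sign_at a k ^+ 2 = 1.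
Proof. by rewrite /sign_at; case: ifP; rewrite ?sqrrN expr1n. Qed.

Lemma qform_cross N l y a b : a != b ->
  qform N l y - qform N l (rescale (sign_at a) y) - qform N l (rescale (sign_at b) y)
  + qform N l (rescale (fun k => sign_at a k * sign_at b k) y)
  = 8%:R * (gram N l a b * (y a 0 * y b 0)).
Proof.
move=> ab; set X := fun c d => gram N l c d * (y c 0 * y d 0).
have qform_rescale s : qform N l (rescale s y) = \sum_c \sum_d X c d * (s c * s d).
  rewrite qform_expand; apply: eq_bigr => c _; apply: eq_bigr => d _.
  by rewrite /X; set g := gram N l c d; rewrite !mxE; ring.
pose coef c d : R := (1 - sign_at a c * sign_at a d) * (1 - sign_at b c * sign_at b d).
have coef_ab : coef a b = 4%:R /\ coef b a = 4%:R.
  rewrite /coef /sign_at !eqxx (negPf ab) eq_sym (negPf ab); split; ring.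
have sign_cancel e c d : (c == e) = (d == e) -> 1 - sign_at e c * sign_at e d = 0.
  by rewrite /sign_at => ->; case: (d == e); ring.
have coef0 c d : ~~ ((c == a) && (d == b) || (c == b) && (d == a)) -> coef c d = 0.
  move=> not_ab; rewrite /coef.
  have [/sign_cancel->|na] := eqVneq (c == a) (d == a); first by rewrite mul0r.
  have [/sign_cancel->|nb] := eqVneq (c == b) (d == b); first by rewrite mulr0.
  exfalso; move: not_ab na nb.
  have [->|ca] := eqVneq c a; have [->|da] := eqVneq d a;
    rewrite ?eqxx ?(eq_sym b a) ?(negPf ab) //=; by case: (_ == b).
transitivity (\sum_c \sum_d X c d * coef c d).
  rewrite qform_expand !qform_rescale -!sumrB -big_split /=; apply: eq_bigr => c _.
  rewrite -!sumrB -big_split /=; apply: eq_bigr => d _; rewrite /coef /X; ring.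
rewrite pair_bigA (bigD1 (a, b)) //= (bigD1 (b, a)) /=; last first.
  by rewrite xpair_eqE negb_and eq_sym ab.
rewrite big1 => [|[c d] /= /andP [cd_ab cd_ba]]; last first.
  by rewrite coef0 ?mulr0 // negb_or -!xpair_eqE cd_ab cd_ba.
rewrite /X (gram_sym N l b a) (mulrC (y b 0)) (proj1 coef_ab) (proj2 coef_ab); ring.
Qed.

End QuadraticForms.

Section Monomial.
Variable F : fieldType.

Lemma nontrivial_left_kernel m n (C : 'M[F]_(m, n)) : (n < m)%N ->
  exists2 z : 'rV_m, z != 0 & z *m C = 0.
Proof.
move=> nm; have : kermx C != 0.
  rewrite kermx_eq0; apply/negP => /eqP full.
  by move: (rank_leq_col C); rewrite full leqNgt nm.
by case/rowV0Pn => z /sub_kermxP zC nz; exists z.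
Qed.

Variables (n : nat) (M : 'M[F]_n).

Lemma monomial_support : M \in unitmx ->
  (forall j k k', M k j != 0 -> M k' j != 0 -> k = k') ->
  exists2 tau : 'I_n -> 'I_n, injective tau & forall k j, M k j != 0 -> k = tau j.
Proof.
move=> Mu col_single.
have col_nz j : exists k, M k j != 0.
  apply/existsP; apply: contraT; rewrite negb_exists => /forallP col0.
  have := congr1 (fun X : 'M[F]_n => X j j) (mulVmx Mu); rewrite !mxE eqxx big1.
    by move/eqP; rewrite eq_sym oner_eq0.
  by move=> k _; rewrite (eqP (negbNE (col0 k))) mulr0.
pose tau j := xchoose (col_nz j).
have tau_nz j : M (tau j) j != 0 := xchooseP (col_nz j).
have tau_supp k j : M k j != 0 -> k = tau j.
  by move=> kj; apply: col_single kj (tau_nz j).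
exists tau => // j j' eq_tau; apply/eqP; apply: contraT => neq.
have entry j2 : (invmx M *m M) j j2 = invmx M j (tau j2) * M (tau j2) j2.
  rewrite mxE (bigD1 (tau j2)) //= big1 ?addr0 // => k ktau.
  have [->|/tau_supp kt] := eqVneq (M k j2) 0; first by rewrite mulr0.
  by rewrite kt eqxx in ktau.
have := entry j'; have := entry j; rewrite mulVmx // !mxE eqxx (negPf neq) -eq_tau.
have nz' : M (tau j) j' != 0 by rewrite eq_tau.
move=> /esym one /esym/eqP; rewrite mulf_eq0 (negPf nz') orbF => /eqP inv0.
by move: one; rewrite inv0 mul0r => /eqP; rewrite eq_sym oner_eq0.
Qed.

Lemma monomial_diag_commute (tau : 'I_n -> 'I_n) (d d' : 'rV[F]_n) :
  (forall k j, M k j != 0 -> k = tau j) -> (forall j, d' 0 (tau j) = d 0 j) ->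
  M *m diag_mx d = diag_mx d' *m M.
Proof.
move=> supp dd'; rewrite mul_diag_mx mul_mx_diag; apply/matrixP => k j; rewrite !mxE.
by have [->|/supp->] := eqVneq (M k j) 0; rewrite ?mul0r ?mulr0 // dd' mulrC.
Qed.

End Monomial.

Section PiCoordinates.
Variables (K : closedFieldType) (theta : 'I_6 -> K).
Hypothesis theta_inj : injective theta.
Implicit Types (Q : {poly K}) (y : 'cV[K]_6) (z v : 'I_6 -> K).

Lemma omega_neq0 j : omega theta j != 0.
Proof.
apply/prodf_neq0 => i ij; rewrite subr_eq0; apply: contra ij => /eqP.
by move/theta_inj->.
Qed.

Lemma theta_roots_eq0 (Q : {poly K}) :
  (size Q <= 6)%N -> (forall j, root Q (theta j)) -> Q = 0.
Proof.
move=> sQ rQ; apply: (@roots_geq_poly_eq0 _ _ [seq theta j | j <- enum 'I_6]).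
- by apply/allP => _ /mapP [j _ ->].
- by rewrite map_inj_uniq ?enum_uniq.
- by rewrite size_map size_enum_ord.
Qed.

Lemma piMx_unit : piMx theta \in unitmx.
Proof.
rewrite -unitmx_tr -row_free_unit; apply: inj_row_free => z zV.
pose P : {poly K} := \poly_(k < 6) z 0 (inord k).
suff P0 : P = 0.
  apply/rowP => k; have := congr1 (fun Q : {poly K} => Q`_k) P0.
  by rewrite coef_poly ltn_ord inord_val coef0 !mxE.
apply: theta_roots_eq0 => [|j]; first exact: size_poly.
have := congr1 (fun X : 'rV_6 => X 0 j) zV; rewrite !mxE rootE horner_poly => zVj.
suff : (\sum_(k < 6) z 0 (inord k) * theta j ^+ k) / omega theta j = 0.
  by move/eqP; rewrite mulf_eq0 invr_eq0 (negPf (omega_neq0 j)) orbF.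
by rewrite mulr_suml -[RHS]zVj; apply: eq_bigr => k _; rewrite !mxE inord_val mulrA.
Qed.

(* z is orthogonal to the coefficient vectors (theta_j^i omega_j)_j, i < 3, of
   the three quadrics cutting out S. *)
Definition netNull (z : 'I_6 -> K) : Prop :=
  forall i : nat, (i < 3)%N -> \sum_j theta j ^+ i * omega theta j * z j = 0.

Lemma netNull_poly z (Q : {poly K}) : netNull z -> (size Q <= 3)%N ->
  \sum_j Q.[theta j] * omega theta j * z j = 0.
Proof.
move=> zN sQ.
under eq_bigr => j _ do rewrite (horner_coef_wide _ sQ) !mulr_suml.
rewrite exchange_big big1 //= => i _.
transitivity (Q`_i * \sum_j theta j ^+ i * omega theta j * z j).
  by rewrite mulr_sumr; apply: eq_bigr => j _; ring.
by rewrite zN ?mulr0.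
Qed.

(* A nonzero null vector has at least four nonzero entries: otherwise a
   quadratic Q vanishing on the others would give sum Q(theta) omega z != 0. *)
Lemma netNull_support z : netNull z -> (#|[set k | z k != 0%R]| <= 3)%N ->
  forall t, z t = 0.
Proof.
move=> zN small t; apply/eqP; apply: contraT => zt.
set U := [set k | z k != 0%R] in small.
pose Q : {poly K} := \prod_(a <- [seq theta k | k <- enum (U :\ t)]) ('X - a%:P).
have sQ : (size Q <= 3)%N.
  rewrite size_prod_XsubC size_map -cardE.
  by move: small; rewrite (cardsD1 t) inE zt.
have Q_kills j : j != t -> Q.[theta j] * omega theta j * z j = 0.
  move=> jt; have [->|zj] := eqVneq (z j) 0; first by rewrite mulr0.
  suff /eqP-> : root Q (theta j) by rewrite !mul0r.
  by rewrite root_prod_XsubC map_f // mem_enum !inE jt.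
move: (netNull_poly zN sQ); rewrite (bigD1 t) //= big1 ?addr0 => [|j]; last exact: Q_kills.
move/eqP; rewrite !mulf_eq0 (negPf zt) (negPf (omega_neq0 t)) !orbF -rootE.
rewrite root_prod_XsubC => /mapP [j]; rewrite mem_enum !inE => /andP [jt _].
by move/theta_inj => tj; rewrite tj eqxx in jt.
Qed.

Lemma netNull_avoiding m1 m2 : m1 != m2 -> exists z,
  [/\ netNull z, z m1 = 0, z m2 = 0 & forall k, k != m1 -> k != m2 -> z k != 0].
Proof.
move=> m12.
pose C : 'M[K]_(6, 5) := \matrix_(r, c)
  if (c < 3)%N then theta r ^+ c * omega theta r
  else if c == 3 :> nat then (r == m1)%:R else (r == m2)%:R.
have [w w_nz wC] := @nontrivial_left_kernel K 6 5 C isT.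
pose z k := w 0 k.
have colC c : \sum_r z r * C r c = 0.
  by have := congr1 (fun X : 'rV_5 => X 0 c) wC; rewrite !mxE.
have sum_delta m : \sum_r z r * (r == m)%:R = z m.
  by rewrite (bigD1 m) //= eqxx mulr1 big1 ?addr0 // => r /negPf->; rewrite mulr0.
have zN : netNull z.
  move=> i i3; rewrite -[RHS](colC (Ordinal (ltn_trans i3 (isT : (3 < 5)%N)))).
  by apply: eq_bigr => r _; rewrite mxE /= i3 mulrC.
have z1 : z m1 = 0.
  rewrite -sum_delta -[RHS](colC (Ordinal (isT : (3 < 5)%N))).
  by apply: eq_bigr => r _; rewrite mxE.
have z2 : z m2 = 0.
  rewrite -sum_delta -[RHS](colC (Ordinal (isT : (4 < 5)%N))).
  by apply: eq_bigr => r _; rewrite mxE.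
exists z; split => // k km1 km2; apply: contra w_nz => /eqP zk.
apply/eqP/rowP => j; rewrite [RHS]mxE; apply: (netNull_support zN).
apply: leq_trans (subset_leq_card (_ : _ \subset ~: (k |: [set m1; m2]))) _.
  apply/subsetP => x; rewrite !inE; apply: contra => /or3P [] /eqP->;
  by rewrite ?zk ?z1 ?z2.
by rewrite cardsCs setCK card_ord cardsU1 cards2 !inE negb_or km1 km2 m12.
Qed.

Definition netAnn (v : 'I_6 -> K) : Prop :=
  forall z, netNull z -> \sum_j v j * z j = 0.

(* Like a quadratic polynomial, an annihilator vanishing at three indices is
   zero: test it against a null vector supported on the other three. *)
Lemma netAnn_vanish3 v a b c : netAnn v -> a != b -> a != c -> b != c ->
  v a = 0 -> v b = 0 -> v c = 0 -> forall t, v t = 0.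
Proof.
move=> vA ab ac bc va vb vc t.
have v_abc x : x \in (a |: [set b; c]) -> v x = 0 by rewrite !inE => /or3P [] /eqP->.
have [/v_abc //|t_abc] := boolP (t \in (a |: [set b; c])).
have : #|~: (t |: (a |: [set b; c]))| == 2%N.
  by rewrite cardsCs setCK card_ord cardsU1 t_abc cardsU1 cards2 !inE negb_or ab ac bc.
case/cards2P => m1 [m2 [m12 compl]].
have [z [zN z1 z2 z_nz]] := netNull_avoiding m12.
have zt : z t != 0.
  have : t \notin ~: (t |: (a |: [set b; c])) by rewrite !inE eqxx.
  by rewrite compl !inE negb_or => /andP [tm1 tm2]; apply: z_nz.
move: (vA z zN); rewrite (bigD1 t) //= big1 ?addr0 => [/eqP|j jt].
  by rewrite mulf_eq0 (negPf zt) orbF => /eqP.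
have [/v_abc->|j_abc] := boolP (j \in (a |: [set b; c])); first by rewrite mul0r.
have : j \in ~: (t |: (a |: [set b; c])) by rewrite in_setC in_setU1 negb_or jt.
by rewrite compl !inE => /orP [] /eqP->; rewrite ?z1 ?z2 mulr0.
Qed.

Definition onS (y : 'cV[K]_6) : Prop := y != 0 /\ netNull (fun j => y j 0 ^+ 2).

Lemma inS_onS p : inS theta p <-> onS (piMx theta *m p).
Proof.
have Vp0 : (piMx theta *m p == 0) = (p == 0).
  apply/eqP/eqP => [Vp|->]; last exact: mulmx0.
  by rewrite -(mulKmx piMx_unit p) Vp mulmx0.
by rewrite /inS /onS Vp0.
Qed.

Lemma onS_rescale s y : (forall k, s k ^+ 2 = 1) -> onS y -> onS (rescale s y).
Proof.
move=> s2 [y_nz yN]; split.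
  apply: contra y_nz => /eqP sy0; apply/eqP/colP => k.
  have := congr1 (fun X : 'cV_6 => s k * X k 0) sy0.
  by rewrite !mxE mulrA -expr2 s2 mul1r mulr0.
move=> i i3; rewrite -[RHS](yN i i3).
by apply: eq_bigr => j _; rewrite mxE exprMn s2 mul1r.
Qed.

Lemma onS_sqrt z : netNull z -> (exists k, z k != 0) ->
  exists2 y, onS y & forall k, y k 0 ^+ 2 = z k.
Proof.
move=> zN [k zk].
have sqrt x : exists r : K, r ^+ 2 == x.
  have /closed_rootP [r] : size ('X^2 - x%:P : {poly K}) != 1%N by rewrite size_XnsubC.
  by rewrite rootE hornerD hornerN hornerXn hornerC subr_eq0 => r2; exists r.
pose y : 'cV[K]_6 := \col_k xchoose (sqrt (z k)).
have y2 k' : y k' 0 ^+ 2 = z k' by rewrite mxE (eqP (xchooseP (sqrt (z k')))).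
exists y => //; split.
  by apply: contra zk => /eqP y0; rewrite -y2 y0 mxE expr0n.
by move=> i i3; rewrite -[RHS](zN i i3); apply: eq_bigr => j _; rewrite y2.
Qed.

Lemma onS_generic a b : a != b -> exists y, [/\ onS y, y a 0 != 0 & y b 0 != 0].
Proof.
move=> ab.
have : (1 < #|~: [set a; b]|)%N by rewrite cardsCs setCK card_ord cards2 ab.
case/card_gt1P => m1 [m2 [m1ab m2ab m12]].
have [z [zN _ _ z_nz]] := netNull_avoiding m12.
move: m1ab m2ab; rewrite !inE !negb_or => /andP [m1a m1b] /andP [m2a m2b].
have za : z a != 0 by apply: z_nz; rewrite eq_sym.
have zb : z b != 0 by apply: z_nz; rewrite eq_sym.
have [y yS y2] := onS_sqrt zN (ex_intro _ a za).
exists y; split => //; [move: za | move: zb];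
  by apply: contra => /eqP y0; rewrite -y2 y0 expr0n.
Qed.

Definition netForm (Q : {poly K}) : 'rV[K]_6 := \row_j (Q.[theta j] * omega theta j).

Lemma netFormB c1 c2 Q1 Q2 :
  netForm (c1 *: Q1 - c2 *: Q2) = c1 *: netForm Q1 - c2 *: netForm Q2.
Proof. by apply/rowP => j; rewrite !mxE hornerD hornerN !hornerZ; ring. Qed.

(* From now on Minv is a left inverse of M and maps S into S (in GL(S),
   M^-1 is the pi-conjugate of A^-1). *)
Section ColumnSupport.
Variables (M Minv : 'M[K]_6).
Hypothesis char2 : (2%:R : K) != 0.
Hypothesis MinvK : Minv *m M = 1%:M.
Hypothesis Minv_onS : forall y, onS y -> onS (Minv *m y).

(* The quadrics of the net, pulled back by Minv, still vanish on S. *)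
Lemma qform_onS Q y : (size Q <= 3)%N -> onS y -> qform Minv (netForm Q) y = 0.
Proof.
move=> sQ /Minv_onS [_ yN]; rewrite -[RHS](netNull_poly yN sQ).
by apply: eq_bigr => k _; rewrite mxE mulrA.
Qed.

(* ... hence, by qform_cross applied at a point of S with y_a, y_b != 0,
   their Gram matrices are diagonal. *)
Lemma gram_offdiag Q a b : (size Q <= 3)%N -> a != b -> gram Minv (netForm Q) a b = 0.
Proof.
move=> sQ ab; have [y [yS ya yb]] := onS_generic ab.
have sign2 k : (sign_at K a k * sign_at K b k) ^+ 2 = 1.
  by rewrite exprMn !sign_at_sqr mulr1.
have := qform_cross Minv (netForm Q) y ab.
rewrite (qform_onS sQ yS) (qform_onS sQ (onS_rescale (@sign_at_sqr _ _ a) yS)).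
rewrite (qform_onS sQ (onS_rescale (@sign_at_sqr _ _ b) yS)) (qform_onS sQ (onS_rescale sign2 yS)).
have eight : (8%:R : K) != 0.
  by rewrite (_ : 8 = 2 * 2 * 2)%N // !natrM !mulf_neq0.
rewrite subrr subrr addr0 => /esym/eqP.
by rewrite !mulf_eq0 (negPf eight) (negPf ya) (negPf yb) !orbF => /eqP.
Qed.

(* The Gram diagonal annihilates null vectors: realize z as squares of a
   point of S. *)
Lemma gram_diag_ann Q : (size Q <= 3)%N -> netAnn (fun a => gram Minv (netForm Q) a a).
Proof.
move=> sQ z zN.
case: (pickP (fun k => z k != 0)) => [k zk | z0]; last first.
  by apply: big1 => k _; rewrite (eqP (negbFE (z0 k))) mulr0.
have [y yS y2] := onS_sqrt zN (ex_intro _ k zk).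
transitivity (qform Minv (netForm Q) y); last exact: qform_onS sQ yS.
rewrite qform_expand; apply: eq_bigr => a _.
rewrite (bigD1 a) //= big1 ?addr0 => [|b ba]; first by rewrite -expr2 y2.
by rewrite gram_offdiag ?mul0r // eq_sym.
Qed.

Lemma gram_diag_eq0 Q : (size Q <= 3)%N ->
  (forall a, gram Minv (netForm Q) a a = 0) -> Q = 0.
Proof.
move=> sQ diag0.
have G0 : gram Minv (netForm Q) = 0.
  apply/matrixP => a b; rewrite [RHS]mxE.
  by have [<-|ab] := eqVneq a b; [exact: diag0 | exact: gram_offdiag].
have D0 : diag_mx (netForm Q) = 0 by rewrite -(gram_inverse _ MinvK) G0 mulmx0 mul0mx.
apply: theta_roots_eq0 => [|j]; first exact: leq_trans sQ _.
have := congr1 (fun X : 'M[K]_6 => X j j) D0; rewrite !mxE eqxx mulr1n.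
by move/eqP; rewrite mulf_eq0 (negPf (omega_neq0 j)) orbF.
Qed.

(* If Q(theta_j) = 0 then M^T G M e_j = 0, so the Gram diagonal G vanishes on
   the support of column j of M. *)
Lemma gram_diag_support Q j k : (size Q <= 3)%N -> root Q (theta j) -> M k j != 0 ->
  gram Minv (netForm Q) k k = 0.
Proof.
move=> sQ Qj Mkj.
have MTu : M^T \in unitmx by rewrite unitmx_tr; exact: (mulmx1_unit MinvK).2.
have c0 : gram Minv (netForm Q) *m col j M = 0.
  suff : M^T *m (gram Minv (netForm Q) *m col j M) = 0.
    by move/(congr1 (mulmx (invmx M^T))); rewrite mulKmx // mulmx0.
  rewrite colE [gram _ _ *m _]mulmxA 2![M^T *m _]mulmxA (gram_inverse _ MinvK) mul_diag_mx.
  apply/colP => a; rewrite !mxE.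
  by case: eqP => [->|_]; rewrite ?(eqP Qj) ?mul0r ?mulr0.
have := congr1 (fun X : 'cV[K]_6 => X k 0) c0; rewrite [LHS]mxE [RHS]mxE.
rewrite (bigD1 k) //= big1 ?addr0 => [|b bk]; last by rewrite gram_offdiag ?mul0r // eq_sym.
by move/eqP; rewrite [col j M k 0]mxE mulf_eq0 (negPf Mkj) orbF => /eqP.
Qed.

(* If k != k' were two, then
   the Gram diagonals w_1, w_2 of X - theta_j and X (X - theta_j) vanish at
   k, k', so w_2(t) w_1 - w_1(t) w_2 vanishes at k, k', t, hence is zero;
   injectivity gives w_2(t) (X - theta_j) = w_1(t) X (X - theta_j) with
   w_1(t) != 0, contradicting the degrees. *)
Lemma column_support j k k' : M k j != 0 -> M k' j != 0 -> k = k'.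
Proof.
move=> Mkj Mk'j; apply/eqP; apply: contraT => kk'.
pose w Q a : K := gram Minv (netForm Q) a a.
have [t tk tk'] : exists2 t, t != k & t != k'.
  have : (0 < #|~: [set k; k']|)%N by rewrite cardsCs setCK card_ord cards2 kk'.
  by case/card_gt0P => t; rewrite !inE negb_or => /andP [tk tk']; exists t.
have w_eq0 Q : (size Q <= 3)%N -> root Q (theta j) -> w Q t = 0 -> Q = 0.
  move=> sQ rQ wt; apply: (gram_diag_eq0 sQ).
  apply: (netAnn_vanish3 (gram_diag_ann sQ) kk' _ _ _ _ wt); rewrite 1?eq_sym //.
    exact: gram_diag_support sQ rQ Mkj.
  exact: gram_diag_support sQ rQ Mk'j.
pose Q1 : {poly K} := 'X - (theta j)%:P.
pose Q2 : {poly K} := Q1 * 'X.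
have Q1_nz : Q1 != 0 by rewrite -size_poly_eq0 size_XsubC.
have sQ1 : (size Q1 <= 3)%N by rewrite size_XsubC.
have sQ2 : size Q2 = 3%N by rewrite size_mulX // size_XsubC.
have rQ1 : root Q1 (theta j) by rewrite root_XsubC.
have rQ2 : root Q2 (theta j) by rewrite rootM rQ1.
have wQ1 : w Q1 t != 0 by apply: contra Q1_nz => /eqP /(w_eq0 _ sQ1 rQ1) ->.
have : w Q2 t *: Q1 - w Q1 t *: Q2 = 0.
  apply: w_eq0.
  - rewrite (leq_trans (size_polyD _ _)) // size_polyN geq_max.
    by rewrite !(leq_trans (size_scale_leq _ _)) ?sQ2.
  - by rewrite rootE hornerD hornerN !hornerZ (eqP rQ1) (eqP rQ2) !mulr0 subrr.
  - by rewrite /w netFormB gram_combine mulrC subrr.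
move/eqP; rewrite subr_eq0 => /eqP scaled_eq.
have := congr1 (fun p : {poly K} => size p) scaled_eq; rewrite /= (size_scale _ wQ1) sQ2 => sz.
by move: (size_scale_leq (w Q2 t) Q1); rewrite sz size_XsubC.
Qed.

End ColumnSupport.

Definition piConj (A : 'M[K]_6) : 'M[K]_6 := piMx theta *m A *m invmx (piMx theta).

Lemma piConjE A : piMx theta *m A = piConj A *m piMx theta.
Proof. by rewrite /piConj mulmxKV // piMx_unit. Qed.

Lemma GLS_monomial A : (2%:R : K) != 0 -> inGLS theta A ->
  exists2 tau, injective tau & forall k j, piConj A k j != 0 -> k = tau j.
Proof.
move=> char2 [Au AS]; have Vu := piMx_unit.
apply: monomial_support.
  by rewrite !unitmx_mul Au Vu unitmx_inv Vu.
have invK : piConj (invmx A) *m piConj A = 1%:M.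
  by rewrite /piConj !mulmxA mulmxKV // -(mulmxA _ (invmx A)) mulVmx // mulmx1 mulmxV.
apply: (column_support char2 invK) => y yS.
pose p := invmx (piMx theta) *m y.
have yp : y = piMx theta *m p by rewrite mulKVmx.
have -> : piConj (invmx A) *m y = piMx theta *m (invmx A *m p).
  by rewrite yp /piConj !mulmxA mulmxKV.
by apply/inS_onS/AS; rewrite mulKVmx //; apply/inS_onS; rewrite -yp.
Qed.

Definition signs (T : {set 'I_6}) : 'rV[K]_6 := \row_j (if j \in T then -1 else 1).

Lemma piMx_eps T : piMx theta *m epsSet theta T = diag_mx (signs T) *m piMx theta.
Proof. by rewrite /epsSet !mulmxA mulmxV ?piMx_unit // mul1mx. Qed.

Lemma piMx_frakp m a : (piMx theta *m frakp theta m) a 0 = (theta a - theta m) / omega theta a.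
Proof.
rewrite !mxE !big_ord_recl big_ord0 /= !mxE /=.
by rewrite !mulr0 !addr0 expr0 expr1 mulr1 mul1r mulrDl addrC [_^-1 * _]mulrC.
Qed.

(* If A is monomial with pattern tau in pi-coordinates and eps_T A maps p_i
   to p_(sigma i), then tau = sigma: the image of p_i vanishes only in the
   coordinate tau i. *)
Lemma monomial_frakp A T (sigma : 'I_6 -> 'I_6) tau :
  injective tau -> (forall k j, piConj A k j != 0 -> k = tau j) ->
  (forall i, peq (epsSet theta T *m A *m frakp theta i) (frakp theta (sigma i))) ->
  forall i, tau i = sigma i.
Proof.
move=> tau_inj tau_supp hsigma i; have [c c_nz eq_c] := hsigma i.
have := congr1 (fun X : 'cV_6 => (piMx theta *m X) (tau i) 0) eq_c.
rewrite /= -scalemxAr [RHS]mxE piMx_frakp (mulmxA _ (_ *m A)) (mulmxA _ (epsSet _ _)).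
rewrite piMx_eps -(mulmxA _ _ A) piConjE -!(mulmxA (diag_mx _)) -(mulmxA (piConj A)).
rewrite mul_diag_mx mxE [X in _ * X = _]mxE big1 => [|a _]; last first.
  have [->|ai] := eqVneq a i; first by rewrite piMx_frakp subrr mul0r mulr0.
  have [|/tau_supp/tau_inj ia] := eqVneq (piConj A (tau i) a) 0; first by move->; rewrite mul0r.
  by rewrite ia eqxx in ai.
move/esym/eqP; rewrite mulr0 !mulf_eq0 (negPf c_nz) invr_eq0 (negPf (omega_neq0 _)) /=.
by rewrite orbF subr_eq0 => /eqP /theta_inj.
Qed.

End PiCoordinates.

Unset Implicit Arguments.
Set Strict Implicit.

Theorem mainTheorem9 (K : closedFieldType) (h2 : (2%:R : K) != 0)
    (F : {poly K}) (theta : 'I_6 -> K)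
    (hF : size F = 7%N) (hroots : forall i, root F (theta i))
    (hinj : injective theta)
    (A : 'M[K]_6) (hA : inGLS theta A)
    (T : {set 'I_6})
    (hT : forall p, inDelta0 p <-> inDelta0 (epsSet theta T *m A *m p))
    (sigma : {perm 'I_6})
    (hsigma : forall i, peq (epsSet theta T *m A *m frakp theta i) (frakp theta (sigma i))) :
  forall (i : 'I_6) (p : 'cV[K]_6), inS theta p ->
    peq (A *m eps theta i *m p) (eps theta (sigma i) *m A *m p).
Proof.
move=> i p _; exists 1; first exact: oner_neq0.
have [tau tau_inj tau_supp] := GLS_monomial hinj h2 hA.
have tau_sigma := monomial_frakp hinj tau_inj tau_supp hsigma.
have commute : piConj theta A *m diag_mx (signs K [set i])
             = diag_mx (signs K [set sigma i]) *m piConj theta A.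
  apply: (monomial_diag_commute tau_supp) => j.
  by rewrite !mxE !inE tau_sigma (inj_eq perm_inj).
(* In pi-coordinates both sides become diag(signs [set sigma i]) M V. *)
rewrite scale1r; congr (_ *m p); apply: (can_inj (mulKmx (piMx_unit hinj))).
have conjE := piConjE hinj; have epsE := piMx_eps hinj.
rewrite mulmxA conjE -(mulmxA (piConj theta A)) epsE (mulmxA (piConj theta A)) commute.
by rewrite (mulmxA (piMx theta)) epsE -[RHS]mulmxA conjE [RHS]mulmxA.
Qed.
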